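(* Let $q\in\mathbb{N}_+$, let $p$ be an odd prime, $n\ge 2$, and let $\sigma\in\mathbb{Z}^{n-1}$ with all entries in $[-\frac{p-1}{2},\frac{p-1}{2}]$ such that $\|\sigma\bmod p\|_q = (p^q-1)^{1/q}$ and $\|k\sigma \bmod p\|_q > \|\sigma\bmod p\|_q$ for every integer $k\not\equiv 0,\pm1 \pmod p$. Let $\vec u = (1,\sigma)\in\mathbb{Z}^n$, $W_i = p\vec e_i$ for $1\le i\le n$, and $\mathcal{L}_+ = \operatorname{span}_{\mathbb{Z}}(W_1,\dots,W_n,\vec u)\subset\mathbb{R}^n$. Then every nonzero $\vec x\in\mathcal{L}_+$ satisfies $\|\vec x\|_q\ge p$, and the vectors of $\mathcal{L}_+$ with $\ell^q$-norm exactly $p$ are precisely $\pm W_1,\dots,\pm W_n,\pm\vec u$.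
   Context: $\|\vec x\|_q = (\sum_i|x_i|^q)^{1/q}$. For real $\alpha$, $|\alpha|_p = \min_{z\in\mathbb{Z}}|\alpha - zp|$, and $\|\vec x\bmod p\|_q = (\sum_i|x_i|_p^q)^{1/q}$. $\vec e_i$ denotes the $i$-th standard unit vector. *)

From HB Require Import structures.
From mathcomp Require Import all_boot all_order all_algebra.
From mathcomp Require Import all_classical all_reals all_analysis.
Set Implicit Arguments. Unset Strict Implicit. Unset Printing Implicit Defensive.
Import Order.TTheory GRing.Theory Num.Theory.
Local Open Scope ring_scope.

(* |a|_p = min_{z in Z} |a - z p| for an integer a and p > 0:
   the distance from a to the nearest multiple of p. *)
Definition absp (p : nat) (a : int) : int :=
  Num.min (a %% p%:Z)%Z (p%:Z - (a %% p%:Z)%Z).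

Definition lqnorm (R : realType) (q : nat) (n : nat) (x : 'rV[int]_n) : R :=
  powR (\sum_(i < n) (`|x 0 i|%:~R : R) ^+ q) (q%:R^-1).

Definition lqmodnorm (R : realType) (q p : nat) (n : nat) (x : 'rV[int]_n) : R :=
  powR (\sum_(i < n) ((absp p (x 0 i))%:~R : R) ^+ q) (q%:R^-1).

Definition in_Lplus (n p : nat) (u x : 'rV[int]_n) : Prop :=
  exists (c : 'rV[int]_n) (k : int), x = p%:Z *: c + k *: u.

From HB Require Import structures.
From mathcomp Require Import all_boot all_order all_algebra.
From mathcomp Require Import all_classical all_reals all_analysis.
From mathcomp Require Import zify.
Import Order.TTheory GRing.Theory Num.Theory.
Local Open Scope ring_scope.

(* Since the q-th root is increasing, all norm statements reduce to the
   integer power sums  S(x) = sum_i |x_i|^q  and  S_p(x) = sum_i |x_i|_p^q,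
   with S_p(x) <= S(x) and S_p invariant under adding multiples of p.
   Writing x = p c + k u, we split according to the class of k mod p:
   - k = 0 mod p:  x = p d, so S(x) = p^q S(d) with S(d) >= 1, and S(d) = 1
     exactly when d = +-e_j;
   - k = +-1 mod p: x = +-(p d + u); when every |u_j| < p/2 each entry satisfies
     |p d_j + u_j| >= |u_j|, so S(x) >= S(u) with equality only for d = 0;
   - otherwise S(x) >= S_p(x) = S_p(k u), which exceeds p^q by hypothesis. *)

Section DistanceToMultiples.
Variable p : nat.

Lemma absp_periodic (a c : int) : absp p (a + p%:Z * c) = absp p a.
Proof. by rewrite /absp addrC mulrC modzMDl. Qed.

Lemma absp_small (a : int) : `|a| * 2 < p%:Z -> absp p a = `|a|.
Proof.
rewrite /absp => a_small; have [a_ge0|a_lt0] := lerP 0 a.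
  by rewrite modz_small; lia.
by rewrite -(modzMDl 1) modz_small; lia.
Qed.

Hypothesis p_gt0 : (0 < p)%N.

Lemma absp_ge0 (a : int) : 0 <= absp p a.
Proof. rewrite /absp; lia. Qed.

Lemma absp_le_norm (a : int) : absp p a <= `|a|.
Proof.
rewrite /absp; have := divz_eq a p%:Z; set d := (a %/ p%:Z)%Z.
by have [d_ge0|d_lt0] := lerP 0 d; nia.
Qed.

Lemma absp_gt0 (a : int) : (a %% p%:Z != 0)%Z -> 1 <= absp p a.
Proof. rewrite /absp; lia. Qed.

End DistanceToMultiples.

Section QthRoot.
Context {R : realType} {q : nat}.
Hypothesis q_gt0 : (0 < q)%N.

Lemma invq_gt0 : 0 < q%:R^-1 :> R.
Proof. by rewrite invr_gt0 ltr0n. Qed.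

Lemma ler_root : {in Num.nneg &, {mono (fun a : R => powR a q%:R^-1) : a b / a <= b}}.
Proof. exact/le_mono_in/gt0_ltr_powR/invq_gt0. Qed.

Lemma root_inj : {in Num.nneg &, injective (fun a : R => powR a q%:R^-1)}.
Proof. exact/powR_injective/invq_gt0. Qed.

Lemma root_pow {a : R} : 0 <= a -> powR (a ^+ q) q%:R^-1 = a.
Proof.
move=> a_ge0; rewrite -powR_mulrn // -powRrM mulfV ?powRr1 //.
by rewrite pnatr_eq0 -lt0n.
Qed.

End QthRoot.

Definition lqsum (q n : nat) (x : 'rV[int]_n) : int := \sum_(i < n) `|x 0 i| ^+ q.
Definition lqmodsum (q p n : nat) (x : 'rV[int]_n) : int :=
  \sum_(i < n) absp p (x 0 i) ^+ q.
Arguments lqsum q {n} x.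
Arguments lqmodsum q p {n} x.

Lemma lqnormE (R : realType) (q n : nat) (x : 'rV[int]_n) :
  lqnorm R q x = powR (lqsum q x)%:~R q%:R^-1.
Proof.
by rewrite /lqnorm /lqsum rmorph_sum; congr powR; apply: eq_bigr => i _; rewrite rmorphXn.
Qed.

Lemma lqmodnormE (R : realType) (q p n : nat) (x : 'rV[int]_n) :
  lqmodnorm R q p x = powR (lqmodsum q p x)%:~R q%:R^-1.
Proof.
rewrite /lqmodnorm /lqmodsum rmorph_sum; congr powR.
by apply: eq_bigr => i _; rewrite rmorphXn.
Qed.

Lemma row_nonzero_entry {R : nmodType} {n : nat} {x : 'rV[R]_n} :
  x != 0 -> exists j, x 0 j != 0.
Proof.
move=> x_neq0; apply/existsP; apply: contraNT x_neq0 => /existsPn x0.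
by apply/eqP/rowP => j; rewrite mxE; apply/eqP/negbNE/x0.
Qed.

Section PowerSums.
Context {q : nat}.

Lemma lqsum_ge0 (n : nat) (x : 'rV[int]_n) : 0 <= lqsum q x.
Proof. by apply: sumr_ge0 => i _; rewrite exprn_ge0. Qed.

Lemma lqmodsum_ge0 (p n : nat) (x : 'rV[int]_n) : (0 < p)%N -> 0 <= lqmodsum q p x.
Proof. by move=> p_gt0; apply: sumr_ge0 => i _; rewrite exprn_ge0 ?absp_ge0. Qed.

Lemma lqsumZ (n : nat) (a : int) (x : 'rV[int]_n) :
  lqsum q (a *: x) = `|a| ^+ q * lqsum q x.
Proof. by rewrite /lqsum mulr_sumr; apply: eq_bigr => i _; rewrite mxE normrM exprMn. Qed.

Lemma lqsumN (n : nat) (x : 'rV[int]_n) : lqsum q (- x) = lqsum q x.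
Proof. by rewrite -scaleN1r lqsumZ normrN1 expr1n mul1r. Qed.

Lemma lqsum_row_mx (n1 n2 : nat) (a : 'rV[int]_n1) (b : 'rV[int]_n2) :
  lqsum q (row_mx a b) = lqsum q a + lqsum q b.
Proof.
by rewrite /lqsum big_split_ord; congr (_ + _); apply: eq_bigr => i _;
  rewrite (row_mxEl, row_mxEr).
Qed.

Lemma lqmodsum_row_mx (p n1 n2 : nat) (a : 'rV[int]_n1) (b : 'rV[int]_n2) :
  lqmodsum q p (row_mx a b) = lqmodsum q p a + lqmodsum q p b.
Proof.
by rewrite /lqmodsum big_split_ord; congr (_ + _); apply: eq_bigr => i _;
  rewrite (row_mxEl, row_mxEr).
Qed.

Lemma lqmodsum_periodic (p : nat) {n : nat} (c x : 'rV[int]_n) :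
  lqmodsum q p (p%:Z *: c + x) = lqmodsum q p x.
Proof. by apply: eq_bigr => i _; rewrite !mxE addrC absp_periodic. Qed.

Lemma lqmodsum_le_lqsum (p n : nat) (x : 'rV[int]_n) :
  (0 < p)%N -> lqmodsum q p x <= lqsum q x.
Proof.
move=> p_gt0; apply: ler_sum => i _.
by apply: lerXn2r; rewrite ?nnegrE ?absp_ge0 ?absp_le_norm.
Qed.

Lemma lqsum_le_pointwise (n : nat) (x y : 'rV[int]_n) :
  (forall j, `|y 0 j| <= `|x 0 j|) -> lqsum q y <= lqsum q x.
Proof. by move=> le_yx; apply: ler_sum => j _; rewrite lerXn2r ?nnegrE. Qed.

Hypothesis q_gt0 : (0 < q)%N.

Lemma lqsum_eq_pointwise {n : nat} {x y : 'rV[int]_n} :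
  (forall j, `|y 0 j| <= `|x 0 j|) -> lqsum q x = lqsum q y ->
  forall j, `|x 0 j| = `|y 0 j|.
Proof.
move=> le_yx eq_xy j.
have diff_ge0 i : true -> 0 <= `|x 0 i| ^+ q - `|y 0 i| ^+ q.
  by rewrite subr_ge0 lerXn2r ?nnegrE.
have diff_sum0 : \sum_i (`|x 0 i| ^+ q - `|y 0 i| ^+ q) = 0.
  by rewrite sumrB -/(lqsum q x) -/(lqsum q y) eq_xy subrr.
move/eqP: (psumr_eq0P diff_ge0 diff_sum0 (i:=j) isT); rewrite subr_eq0.
by rewrite eqrXn2 ?normr_ge0 // => /eqP.
Qed.

Lemma lqsum_delta (n : nat) (j : 'I_n) : lqsum q (delta_mx 0 j) = 1.
Proof.
rewrite /lqsum (bigD1 j) //= big1 => [|i neq_ij]; rewrite !mxE eqxx /=.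
  by rewrite eqxx normr1 expr1n addr0.
by rewrite (negbTE neq_ij) normr0 expr0n gtn_eqF.
Qed.

Lemma lqsum_ge1 (n : nat) (x : 'rV[int]_n) : x != 0 -> 1 <= lqsum q x.
Proof.
move=> x_neq0; have [j xj_neq0] := row_nonzero_entry x_neq0.
rewrite /lqsum (bigD1 j) //= -[1]addr0 lerD //.
  by rewrite exprn_ege1 // -gtz0_ge1 normr_gt0.
by rewrite sumr_ge0 // => i _; rewrite exprn_ge0.
Qed.

Lemma lqsum_eq1 (n : nat) (x : 'rV[int]_n) : lqsum q x = 1 ->
  exists j, x = delta_mx 0 j \/ x = - delta_mx 0 j.
Proof.
move=> sum1; have x_neq0 : x != 0.
  apply: contra_eq_neq sum1 => ->.
  by rewrite /lqsum big1 // => i _; rewrite mxE normr0 expr0n gtn_eqF.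
have [j xj_neq0] := row_nonzero_entry x_neq0.
move: sum1; rewrite /lqsum (bigD1 j) //=.
set rest := \sum_(i < n | i != j) _ => sum1.
have rest_ge0 : 0 <= rest by rewrite sumr_ge0 // => i _; rewrite exprn_ge0.
have xj_ge1 : 1 <= `|x 0 j| ^+ q by rewrite exprn_ege1 // -gtz0_ge1 normr_gt0.
have rest0 : rest = 0 by lia.
have xj_abs1 : `|x 0 j| = 1.
  by apply/eqP; rewrite -(pexpr_eq1 q_gt0) ?normr_ge0 //; apply/eqP; lia.
have x_single : x = x 0 j *: delta_mx 0 j.
  apply/rowP => i; rewrite !mxE eqxx /=; have [->|neq_ij] := eqVneq i j.
    by rewrite mulr1.
  have /eqP := psumr_eq0P (fun i _ => exprn_ge0 q (normr_ge0 (x 0 i))) rest0 neq_ij.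
  by rewrite mulr0 expf_eq0 normr_eq0 => /andP[_ /eqP].
exists j; rewrite x_single.
have [->|->] : x 0 j = 1 \/ x 0 j = -1 by lia.
  by left; rewrite scale1r.
by right; rewrite scaleN1r.
Qed.

End PowerSums.

Lemma abs_shift_ge {p : nat} {t a : int} :
  `|a| * 2 < p%:Z -> `|a| <= `|p%:Z * t + a|.
Proof.
move=> a_small; have [t_ge1|t_lt1] := lerP 1 t; first nia.
by have [t_le|t_gt] := lerP t (-1); nia.
Qed.

Lemma abs_shift_eq {p : nat} {t a : int} :
  `|a| * 2 < p%:Z -> `|p%:Z * t + a| = `|a| -> t = 0.
Proof.
move=> a_small; have [t_ge1|t_lt1] := lerP 1 t; first nia.
by have [t_le|t_gt] := lerP t (-1); nia.
Qed.

Lemma eqz_mod_decomp {p : nat} {k r : int} :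
  (k == r %[mod p%:Z])%Z -> exists t, k = p%:Z * t + r.
Proof. by rewrite eqz_mod_dvd => /dvdzP[t kr]; exists t; rewrite mulrC -kr subrK. Qed.

Notation unit_class p k :=
  [|| (k == 0 %[mod p%:Z])%Z, (k == 1 %[mod p%:Z])%Z | (k == -1 %[mod p%:Z])%Z].

Lemma Lplus_cases (p n : nat) (u x : 'rV[int]_n) : in_Lplus p u x ->
  [\/ exists d, x = p%:Z *: d,
      exists d (s : int), (s = 1 \/ s = -1) /\ x = s *: (p%:Z *: d + u)
    | exists c (k : int), ~~ unit_class p k /\ x = p%:Z *: c + k *: u].
Proof.
case=> c [k ->]; have [k0|k_not0] := boolP (k == 0 %[mod p%:Z])%Z.
  have [t ->] := eqz_mod_decomp k0; apply: Or31; exists (c + t *: u).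
  by rewrite addr0 scalerDr scalerA.
have [k1|k_not1] := boolP (k == 1 %[mod p%:Z])%Z.
  have [t ->] := eqz_mod_decomp k1; apply: Or32; exists (c + t *: u), 1.
  by split; [left | rewrite scale1r scalerDl scale1r scalerDr scalerA addrA].
have [kN1|k_notN1] := boolP (k == -1 %[mod p%:Z])%Z.
  have [t ->] := eqz_mod_decomp kN1; apply: Or32; exists (- (c + t *: u)), (-1).
  split; first by right.
  by rewrite scalerDl !scaleN1r scalerN opprD opprK scalerDr scalerA addrA.
by apply: Or33; exists c, k; rewrite (negbTE k_not0) (negbTE k_not1) (negbTE k_notN1).
Qed.

Section LatticeMinima.
Context {q p n : nat} {u : 'rV[int]_n}.
Hypotheses (q_gt0 : (0 < q)%N) (p_gt0 : (0 < p)%N).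
Hypothesis u_small : forall j, `|u 0 j| * 2 < p%:Z.
Hypothesis lqsum_u : lqsum q u = p%:Z ^+ q.
Hypothesis lqmodsum_ku :
  forall {k : int}, ~~ unit_class p k -> p%:Z ^+ q < lqmodsum q p (k *: u).

Lemma lqsum_pmul_ge (d : 'rV[int]_n) : d != 0 -> p%:Z ^+ q <= lqsum q (p%:Z *: d).
Proof.
move=> d_neq0; rewrite lqsumZ ger0_norm // -[leLHS]mulr1 ler_pM2l ?lqsum_ge1 //.
by rewrite exprn_gt0 // ltz_nat.
Qed.

Lemma lqsum_pmul_eq {d : 'rV[int]_n} : lqsum q (p%:Z *: d) = p%:Z ^+ q ->
  exists j, d = delta_mx 0 j \/ d = - delta_mx 0 j.
Proof.
have pq_neq0 : p%:Z ^+ q != 0 by rewrite expf_neq0 // eqz_nat -lt0n.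
by rewrite lqsumZ ger0_norm // -[RHS]mulr1 => /(mulfI pq_neq0)/(lqsum_eq1 q_gt0).
Qed.

Lemma lqsum_near_u_ge (d : 'rV[int]_n) : lqsum q u <= lqsum q (p%:Z *: d + u).
Proof. by apply: lqsum_le_pointwise => j; rewrite !mxE abs_shift_ge. Qed.

Lemma lqsum_near_u_eq (d : 'rV[int]_n) : lqsum q (p%:Z *: d + u) = lqsum q u -> d = 0.
Proof.
move=> eq_sum; apply/rowP => j; rewrite mxE; apply: (abs_shift_eq (u_small j)).
have le_u i : `|u 0 i| <= `|(p%:Z *: d + u) 0 i| by rewrite !mxE abs_shift_ge.
by have := lqsum_eq_pointwise q_gt0 le_u eq_sum j; rewrite !mxE.
Qed.

(* Vectors p c + k u with k not 0, +-1 mod p: S >= S_p = S_p(k u) > p^q. *)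
Lemma lqsum_generic_gt {c : 'rV[int]_n} {k : int} :
  ~~ unit_class p k -> p%:Z ^+ q < lqsum q (p%:Z *: c + k *: u).
Proof.
move=> k_generic; apply: (lt_le_trans (lqmodsum_ku k_generic)).
by rewrite -(lqmodsum_periodic p c) lqmodsum_le_lqsum.
Qed.

Lemma Lplus_lower_bound (x : 'rV[int]_n) :
  in_Lplus p u x -> x != 0 -> p%:Z ^+ q <= lqsum q x.
Proof.
case/Lplus_cases => [[d ->]|[d [s [s_sign ->]]]|[c [k [k_generic ->]]]] x_neq0.
- by apply: lqsum_pmul_ge; apply: contraNneq x_neq0 => ->; rewrite scaler0.
- rewrite -lqsum_u.
  by case: s_sign => ->; rewrite ?scale1r ?scaleN1r ?lqsumN lqsum_near_u_ge.
- exact/ltW/lqsum_generic_gt.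
Qed.

Lemma Lplus_minimal (x : 'rV[int]_n) :
  in_Lplus p u x -> lqsum q x = p%:Z ^+ q ->
  (exists j, x = p%:Z *: delta_mx 0 j \/ x = - (p%:Z *: delta_mx 0 j)) \/ x = u \/ x = - u.
Proof.
case/Lplus_cases => [[d ->]|[d [s [s_sign ->]]]|[c [k [k_generic ->]]]] min_x.
- have [j [->|->]] := lqsum_pmul_eq min_x; left; exists j; first by left.
  by right; rewrite scalerN.
- have d0 : d = 0.
    apply: lqsum_near_u_eq; rewrite lqsum_u -min_x.
    by case: s_sign => ->; rewrite ?scale1r ?scaleN1r ?lqsumN.
  right; rewrite d0 scaler0 add0r.
  by case: s_sign => ->; rewrite ?scale1r ?scaleN1r; [left|right].
- by have := lqsum_generic_gt (c:=c) k_generic; rewrite min_x ltxx.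
Qed.

Lemma listed_minimal {x : 'rV[int]_n} :
  (exists j, x = p%:Z *: delta_mx 0 j \/ x = - (p%:Z *: delta_mx 0 j)) \/ x = u \/ x = - u ->
  in_Lplus p u x /\ lqsum q x = p%:Z ^+ q.
Proof.
have lqsum_pe j : lqsum q (p%:Z *: delta_mx 0 j) = p%:Z ^+ q.
  by rewrite lqsumZ lqsum_delta // mulr1 ger0_norm.
case=> [[j [->|->]]|[->|->]]; split; rewrite ?lqsumN //.
- by exists (delta_mx 0 j), 0; rewrite scale0r addr0.
- by exists (- delta_mx 0 j), 0; rewrite scale0r addr0 scalerN.
- by exists 0, 1; rewrite scaler0 add0r scale1r.
- by exists 0, (-1); rewrite scaler0 add0r scaleN1r.
Qed.

End LatticeMinima.

Section NormsAndPowerSums.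
Context {R : realType} {q : nat}.
Hypothesis q_gt0 : (0 < q)%N.

Lemma ler_nat_lqnorm (P n : nat) (x : 'rV[int]_n) :
  ((P%:R : R) <= lqnorm R q x) = (P%:Z ^+ q <= lqsum q x).
Proof.
rewrite lqnormE -{1}(root_pow q_gt0 (ler0n R P)).
by rewrite ler_root ?nnegrE ?exprn_ge0 ?ler0z ?lqsum_ge0 // -(ler_int R) rmorphXn.
Qed.

Lemma lqnorm_eq_nat {P n : nat} {x : 'rV[int]_n} :
  lqnorm R q x = P%:R <-> lqsum q x = P%:Z ^+ q.
Proof.
rewrite lqnormE -(root_pow q_gt0 (ler0n R P)); split => [|->]; last by rewrite rmorphXn.
move/(root_inj q_gt0); rewrite !nnegrE ?exprn_ge0 ?ler0z ?lqsum_ge0 // => /(_ isT isT) sum_eq.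
by apply/eqP; rewrite -(eqr_int R) rmorphXn sum_eq.
Qed.

Lemma lqmodnorm_lt {p n : nat} {x y : 'rV[int]_n} : (0 < p)%N ->
  lqmodnorm R q p x < lqmodnorm R q p y -> lqmodsum q p x < lqmodsum q p y.
Proof.
move=> p_gt0; rewrite !lqmodnormE (leW_mono_in (ler_root q_gt0)) ?ltr_int //.
all: by rewrite nnegrE ler0z lqmodsum_ge0.
Qed.

Lemma lqmodnorm_eq_pred {p n P : nat} {x : 'rV[int]_n} : (0 < p)%N -> (0 < P)%N ->
  lqmodnorm R q p x = powR ((P%:R : R) ^+ q - 1) q%:R^-1 ->
  lqmodsum q p x = P%:Z ^+ q - 1.
Proof.
move=> p_gt0 P_gt0; rewrite lqmodnormE => /(root_inj q_gt0).
rewrite !nnegrE ler0z lqmodsum_ge0 // subr_ge0 exprn_ege1 ?ler1n // => /(_ isT isT).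
by move=> sum_eq; apply/eqP; rewrite -(eqr_int R) rmorphB rmorphXn sum_eq.
Qed.

End NormsAndPowerSums.

Lemma half_bound {p : nat} {a : int} : (0 < p)%N ->
  - ((p.-1)./2)%:Z <= a <= ((p.-1)./2)%:Z -> `|a| * 2 < p%:Z.
Proof.
move=> p_gt0 a_bd; have := odd_double_half p.-1.
by move: ((p.-1)./2) (odd p.-1) a_bd => h b; lia.
Qed.

Lemma row1_small {p m : nat} {sigma : 'rV[int]_m} : (2 < p)%N ->
  (forall i, `|sigma 0 i| * 2 < p%:Z) ->
  forall j, `|(row_mx 1 sigma : 'rV[int]_(1 + m)) 0 j| * 2 < p%:Z.
Proof.
move=> p_gt2 sigma_small j; case: (split_ordP j) => k ->; rewrite (row_mxEl, row_mxEr) //.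
by rewrite ord1 mxE /= normr1 mul1r ltz_nat.
Qed.

Lemma lqsum_row1 {q p m : nat} {sigma : 'rV[int]_m} :
  (forall i, `|sigma 0 i| * 2 < p%:Z) -> lqmodsum q p sigma = p%:Z ^+ q - 1 ->
  lqsum q (row_mx 1 sigma : 'rV[int]_(1 + m)) = p%:Z ^+ q.
Proof.
move=> sigma_small sigma_sum; rewrite lqsum_row_mx /lqsum big_ord1 mxE /= normr1 expr1n.
rewrite (eq_bigr (fun i => absp p (sigma 0 i) ^+ q)) => [|i _]; last by rewrite absp_small.
by rewrite -/(lqmodsum q p sigma) sigma_sum addrC subrK.
Qed.

Lemma lqmodsum_row1_gt {q p m : nat} {sigma : 'rV[int]_m} {k : int} : (0 < p)%N ->
  lqmodsum q p sigma = p%:Z ^+ q - 1 -> ~~ unit_class p k ->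
  lqmodsum q p sigma < lqmodsum q p (k *: sigma) ->
  p%:Z ^+ q < lqmodsum q p (k *: (row_mx 1 sigma : 'rV[int]_(1 + m))).
Proof.
move=> p_gt0 sigma_sum k_generic; rewrite sigma_sum scale_row_mx lqmodsum_row_mx.
have k_abs : 1 <= absp p k ^+ q.
  apply/exprn_ege1/absp_gt0 => //.
  by move: k_generic; rewrite mod0z => /norP[].
rewrite /lqmodsum big_ord_recl big_ord0 !mxE /= mulr1 addr0 -/(lqmodsum q p (k *: sigma)).
lia.
Qed.

Theorem lemma4p4 (R : realType) (q p m : nat) (sigma : 'rV[int]_m) :
  (0 < q)%N -> prime p -> odd p -> (1 <= m)%N ->
  (forall i, - ((p.-1)./2)%:Z <= sigma 0 i <= ((p.-1)./2)%:Z) ->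
  lqmodnorm R q p sigma = powR ((p%:R : R) ^+ q - 1) (q%:R^-1) ->
  (forall k : int,
      ~~ [|| (k == 0 %[mod p%:Z])%Z, (k == 1 %[mod p%:Z])%Z | (k == -1 %[mod p%:Z])%Z] ->
      lqmodnorm R q p sigma < lqmodnorm R q p (k *: sigma)) ->
  let u : 'rV[int]_(1 + m) := row_mx 1 sigma in
  (forall x : 'rV[int]_(1 + m), in_Lplus p u x -> x != 0 -> (p%:R : R) <= lqnorm R q x) /\
  (forall x : 'rV[int]_(1 + m),
      (in_Lplus p u x /\ lqnorm R q x = (p%:R : R)) <->
      ((exists i : 'I_(1 + m), x = p%:Z *: delta_mx 0 i \/ x = - (p%:Z *: delta_mx 0 i))
       \/ x = u \/ x = - u)).
Proof.
move=> q_gt0 p_prime p_odd _ sigma_bd sigma_norm sigma_min u.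
have p_gt2 : (2 < p)%N := odd_prime_gt2 p_odd p_prime.
have p_gt0 : (0 < p)%N by apply: ltn_trans p_gt2.
have sigma_small i : `|sigma 0 i| * 2 < p%:Z := half_bound p_gt0 (sigma_bd i).
have sigma_sum : lqmodsum q p sigma = p%:Z ^+ q - 1.
  exact: (lqmodnorm_eq_pred q_gt0 p_gt0 p_gt0 sigma_norm).
have u_small : forall j, `|u 0 j| * 2 < p%:Z := row1_small p_gt2 sigma_small.
have u_sum : lqsum q u = p%:Z ^+ q := lqsum_row1 sigma_small sigma_sum.
have u_generic k : ~~ unit_class p k -> p%:Z ^+ q < lqmodsum q p (k *: u).
  move=> k_generic; apply: (lqmodsum_row1_gt p_gt0 sigma_sum k_generic).
  exact: (lqmodnorm_lt q_gt0 p_gt0 (sigma_min k k_generic)).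
split=> [x x_in x_neq0 | x].
  by rewrite ler_nat_lqnorm //; apply: (Lplus_lower_bound p_gt0 u_small u_sum u_generic).
split=> [[x_in /(lqnorm_eq_nat q_gt0) x_min] | x_listed].
  exact: (Lplus_minimal q_gt0 p_gt0 u_small u_sum u_generic).
have [x_in x_min] := listed_minimal q_gt0 u_sum x_listed.
by split; last exact/(lqnorm_eq_nat q_gt0).
Qed.
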